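(* Let $\ell\ge 2$ be an integer, let $Q_\ell$ be the $\ell$-dimensional hypercube graph (vertex set $\{0,1\}^\ell$, two vertices adjacent iff they differ in exactly one coordinate), and fix a proper edge coloring of $Q_\ell$ with $\ell$ colors $C_1,\dots,C_\ell$, so that every color class $E_j$ consists of $2^{\ell-1}$ edges. Let $\epsilon>0$ and consider the Bounded Color Matching instance on $Q_\ell$ with these color classes and color bounds $w_j=2(1-\epsilon)$ for all $j\in[\ell]$. Let $\psi$ be a positive integer and define the vector $\mathbf{y}$ indexed by subsets $I$ of the edge set $E=E(Q_\ell)$ by $$y_\emptyset=1,\qquad y_{\{e\}}=\rho:=\frac{1-\epsilon}{2^{\ell-2}+\psi(1-\epsilon)}\ \ \forall e\in E,\qquad y_I=0\ \ \forall I\subseteq E,\ |I|\ge 2.$$ Then, for any $\psi=o(2^{\ell-2})$, the vector $\mathbf{y}$ is feasible for the $\psi$-th level of the Sherali–Adams hierarchy applied to the natural LP relaxation $\mathcal{M}_c$ of this instance.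
   Context: Bounded Color Matching (BCM): given a simple undirected graph $G=(V,E)$ whose edge set is partitioned into color classes $E_1\cup\dots\cup E_k$, with bounds $w_j\ge 1$ (not necessarily integral), find a matching $M$ with $|M\cap E_j|\le w_j$ for all $j$ maximizing the total profit. Its natural LP relaxation is $\mathcal{M}_c=\{x\in[0,1]^E:\ \sum_{e\in\delta(v)}x_e\le 1\ \forall v\in V,\ \sum_{e\in E_j}x_e\le w_j\ \forall j\}$, where $\delta(v)$ is the set of edges incident to $v$. Sherali–Adams hierarchy: for a polytope $F_0=\{x\in[0,1]^n: a_i^Tx\le b_i,\ i\in[m]\}$ (the box constraints $x_j\ge 0$, $1-x_j\ge 0$ counted among its constraints), the level-$\psi$ lifted system has variables $y_Z$ for $Z\subseteq[n]$ with $y_\emptyset=1$, and for every pair of disjoint sets $\Gamma,\Delta\subseteq[n]$ with $|\Gamma|+|\Delta|\le\psi$ contains (i) for each constraint $b_i-a_i^Tx\ge 0$ the constraint $\sum_{H\subseteq\Delta}(-1)^{|H|}\big(b_i\,y_{\Gamma\cup H}-\sum_{j}a_{ij}\,y_{\Gamma\cup H\cup\{j\}}\big)\ge 0$ (this is the linearization of $(b_i-a_i^Tx)\prod_{\gamma\in\Gamma}x_\gamma\prod_{\delta\in\Delta}(1-x_\delta)\ge0$ using $x_i^2=x_i$ and replacing $\prod_{\zeta\in Z}x_\zeta$ by $y_Z$), and (ii) $\sum_{H\subseteq\Delta}(-1)^{|H|}y_{\Gamma\cup H}\ge 0$. A vector $\mathbf{y}$ is feasible for level $\psi$ if it satisfies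 all these constraints; the level-$\psi$ relaxation $F_\psi$ is the projection $\{x: \exists\, \mathbf{y}\text{ feasible},\ y_{\{i\}}=x_i\ \forall i\}$. *)

From HB Require Import structures.
From mathcomp Require Import all_boot all_order all_algebra.
Set Implicit Arguments. Unset Strict Implicit. Unset Printing Implicit Defensive.
Import Order.TTheory GRing.Theory Num.Theory.
Local Open Scope ring_scope.

(* A polytope F0 = {x in [0,1]^T : a_i^T x <= b_i, i in I}; the index type I
   must already contain the box constraints (as the paper counts them).
   y : {set T} -> R is the vector of lifted variables y_Z. *)
Definition SA_feasible (R : numDomainType) (T I : finType)
    (a : I -> T -> R) (b : I -> R) (psi : nat) (y : {set T} -> R) : Prop :=
  y set0 = 1 /\
  forall Gam Del : {set T}, [disjoint Gam & Del] -> (#|Gam| + #|Del| <= psi)%N ->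
    (forall i : I,
       0 <= \sum_(H in powerset Del)
              (-1) ^+ #|H| * (b i * y (Gam :|: H)
                              - \sum_(j : T) a i j * y (Gam :|: H :|: [set j])))
    /\ 0 <= \sum_(H in powerset Del) (-1) ^+ #|H| * y (Gam :|: H).

(* Constraints (as a_i^T x <= b_i):
   - inl (inl v) : sum_{e in delta(v)} x_e <= 1
   - inl (inr j) : sum_{e in E_j} x_e <= w_j
   - inr (inl e) : - x_e <= 0          (box)
   - inr (inr e) : x_e <= 1            (box) *)
Definition BCM_a (R : nzRingType) (V E K : finType) (inc : E -> V -> bool)
  (col : E -> K) : ((V + K) + (E + E))%type -> E -> R :=
  fun i f => match i with
  | inl (inl v) => (inc f v)%:R
  | inl (inr j) => (col f == j)%:R
  | inr (inl e) => - (f == e)%:R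
  | inr (inr e) => (f == e)%:R
  end.

Definition BCM_b (R : nzRingType) (V E K : finType) (w : K -> R) :
  ((V + K) + (E + E))%type -> R :=
  fun i => match i with
  | inl (inl _) => 1
  | inl (inr j) => w j
  | inr (inl _) => 0
  | inr (inr _) => 1
  end.

Definition cube_vertex (l : nat) := {ffun 'I_l -> bool}.

Definition cube_adj (l : nat) (u v : cube_vertex l) : bool :=
  #|[set i : 'I_l | u i != v i]| == 1%N.

Definition is_cube_edge (l : nat) (e : {set cube_vertex l}) : bool :=
  [exists u, exists v, (e == [set u; v]) && cube_adj u v].

Definition cube_edge (l : nat) := {e : {set cube_vertex l} | is_cube_edge e}.

Definition cube_inc (l : nat) (e : cube_edge l) (v : cube_vertex l) : bool :=
  v \in val e.

Definition proper_coloring (l : nat) (col : cube_edge l -> 'I_l) : Prop :=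
  forall e f : cube_edge l, e != f ->
    [exists v, cube_inc e v && cube_inc f v] -> col e != col f.

Definition y_vec (R : fieldType) (l psi : nat) (eps : R)
    (Z : {set cube_edge l}) : R :=
  if Z == set0 then 1
  else if #|Z| == 1%N then
    (1 - eps) / (2 ^+ (l - 2) + psi%:R * (1 - eps))
  else 0.

From HB Require Import structures.
From mathcomp Require Import all_boot all_order all_algebra.
From mathcomp Require Import zify ring lra.
Set Implicit Arguments. Unset Strict Implicit. Unset Printing Implicit Defensive.
Import Order.TTheory GRing.Theory Num.Theory.
Local Open Scope ring_scope.

(* Since y vanishes on all sets of at least two edges, each lifted constraint
   of level psi collapses: it is 0 when |Gam| >= 2, rho (b_i - a_i(g)) when
   Gam = {g}, and b_i - rho sum_j a_ij - rho sum_(h in Del) (b_i - a_ih) when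
   Gam is empty.  In the last case a proper l-colouring bounds every degree by l
   and makes every colour class a matching, with at most 2^(l-1) edges.  Vertex
   and upper box constraints are then at least 1 - (l + psi) rho >= 0, because
   l (1 - eps) <= 2^(l-2) once l >= 4; nonnegativity constraints are at least
   rho (1 - [e in Del]) >= 0; colour constraints are at least
   2 (1 - eps) (1 - psi rho) - 2^(l-1) rho, which is 0 by the choice of rho. *)

Lemma sum_powerset_card_le1 (R : nmodType) (T : finType) (D : {set T})
    (g : {set T} -> R) :
  (forall H : {set T}, (1 < #|H|)%N -> g H = 0) ->
  \sum_(H in powerset D) g H = g set0 + \sum_(h in D) g [set h].
Proof.
move=> g_big.
rewrite (bigID (fun H : {set T} => #|H| <= 1)%N) /= [X in _ + X]big1 ?addr0;
  last by move=> H /andP[_]; rewrite -ltnNge; apply: g_big.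
rewrite (eq_bigl (mem (set0 |: [set [set h] | h in D]))); last first.
  move=> H; rewrite !inE.
  have [->|H0] := eqVneq H set0; first by rewrite sub0set cards0.
  apply/andP/imsetP => [[sHD H_le1]|[h hD ->]]; last first.
    by rewrite sub1set hD cards1.
  have /cards1P[h Hh] : #|H| == 1%N by rewrite eqn_leq H_le1 card_gt0.
  by exists h; rewrite // -sub1set -Hh.
rewrite big_setU1 /=; last first.
  by apply/imsetP => -[h _ /esym/eqP]; rewrite -cards_eq0 cards1.
by rewrite big_imset //= => x y _ _; apply: set1_inj.
Qed.

Lemma sumr_indicator (R : nzSemiRingType) (T : finType) (P : pred T) :
  \sum_j (P j)%:R = #|P|%:R :> R.
Proof.
rewrite -sum1_card natr_sum [RHS]big_mkcond.
by apply: eq_bigr => j _; rewrite unfold_in; case: (P j).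
Qed.

Lemma sumr_delta (R : nzSemiRingType) (T : finType) (A : {pred T}) (e : T) :
  \sum_(j in A) (j == e)%:R = (e \in A)%:R :> R.
Proof.
rewrite big_mkcond (bigD1 e) //= eqxx big1 ?addr0; first by case: (e \in A).
by move=> j /negbTE ->; case: (j \in A).
Qed.

Lemma sumr_delta1 (R : nzSemiRingType) (T : finType) (e : T) :
  \sum_j (j == e)%:R = 1 :> R.
Proof. exact: (sumr_delta _ predT). Qed.

Lemma sumr_le_card (R : numDomainType) (T : finType) (A : {pred T})
    (f : T -> R) (c : R) :
  (forall j, f j <= c) -> \sum_(j in A) f j <= #|A|%:R * c.
Proof.
by move=> f_le; rewrite mulr_natl -sumr_const; apply: ler_sum => j _.
Qed.

Section SingletonSupported.

Variables (R : numDomainType) (T : finType) (rho : R) (y : {set T} -> R).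
Hypotheses (y_set0 : y set0 = 1) (y_set1 : forall t, y [set t] = rho)
  (y_card_gt1 : forall Z : {set T}, (1 < #|Z|)%N -> y Z = 0).

Definition lifted_constraint (c : R) (a : T -> R) (Gam Del : {set T}) : R :=
  \sum_(H in powerset Del)
    (-1) ^+ #|H| * (c * y (Gam :|: H) - \sum_j a j * y (Gam :|: H :|: [set j])).

Lemma y_supset_card_gt1 (Z Z' : {set T}) :
  (1 < #|Z|)%N -> Z \subset Z' -> y Z' = 0.
Proof.
by move=> Z_gt1 sZZ'; apply/y_card_gt1/(leq_trans Z_gt1)/subset_leq_card.
Qed.

Lemma lifted_constraint_card_gt1 (c : R) (a : T -> R) (Gam Del : {set T}) :
  (1 < #|Gam|)%N -> lifted_constraint c a Gam Del = 0.
Proof.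
move=> Gam_gt1; rewrite /lifted_constraint big1 // => H _.
rewrite (y_supset_card_gt1 Gam_gt1) ?subsetUl // big1 ?subr0 ?mulr0 // => j _.
by rewrite (y_supset_card_gt1 Gam_gt1) ?mulr0 // -setUA subsetUl.
Qed.

Lemma sum_weighted_y_set1 (a : T -> R) (g : T) :
  \sum_j a j * y ([set g] :|: [set j]) = a g * rho.
Proof.
rewrite (bigD1 g) //= setUid y_set1 big1 ?addr0 // => j j_neq_g.
by rewrite y_card_gt1 ?mulr0 // cards2 eq_sym j_neq_g.
Qed.

Lemma lifted_constraint_set1 (c : R) (a : T -> R) (g : T) (Del : {set T}) :
  g \notin Del -> lifted_constraint c a [set g] Del = rho * (c - a g).
Proof.
move=> g_notin_Del; rewrite /lifted_constraint sum_powerset_card_le1; last first.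
  move=> H H_gt1; rewrite (y_supset_card_gt1 H_gt1) ?subsetUr //.
  rewrite big1 ?subr0 ?mulr0 // => j _.
  by rewrite (y_supset_card_gt1 H_gt1) ?mulr0 // -setUA setUCA subsetUl.
rewrite cards0 mul1r !setU0 y_set1 sum_weighted_y_set1.
rewrite [X in _ + X]big1 ?addr0 => [|h h_in_Del].
  by rewrite mulrBr mulrC [a g * _]mulrC.
have gh_gt1 : (1 < #|[set g; h]|)%N.
  by rewrite cards2 ltnS lt0b; apply: contraNneq _ g_notin_Del => ->.
rewrite (y_supset_card_gt1 gh_gt1) // big1 ?subr0 ?mulr0 // => j _.
by rewrite (y_supset_card_gt1 gh_gt1) ?mulr0 ?subsetUl.
Qed.

Lemma lifted_constraint_set0 (c : R) (a : T -> R) (Del : {set T}) :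
  lifted_constraint c a set0 Del
    = c - rho * \sum_j a j - rho * \sum_(h in Del) (c - a h).
Proof.
rewrite /lifted_constraint sum_powerset_card_le1; last first.
  move=> H H_gt1; rewrite set0U y_card_gt1 // big1 ?subr0 ?mulr0 // => j _.
  by rewrite (y_supset_card_gt1 H_gt1) ?mulr0 ?subsetUl.
rewrite cards0 mul1r setU0 y_set0 mulr1; congr (_ - _ + _).
  by rewrite mulr_sumr; apply: eq_bigr => j _; rewrite set0U y_set1 mulrC.
rewrite mulr_sumr -sumrN; apply: eq_bigr => h _.
rewrite set0U cards1 expr1 mulN1r y_set1 sum_weighted_y_set1.
by rewrite mulrBr mulrC [a h * _]mulrC.
Qed.

Lemma lifted_constraint_ge0 (c : R) (a : T -> R) (Gam Del : {set T}) :
  0 <= rho -> [disjoint Gam & Del] -> (forall j, a j <= c) ->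
  (Gam = set0 -> 0 <= c - rho * \sum_j a j - rho * \sum_(h in Del) (c - a h)) ->
  0 <= lifted_constraint c a Gam Del.
Proof.
move=> rho_ge0 Gam_Del_disj a_le_c set0_ok.
case: (ltngtP #|Gam| 1) => [|Gam_gt1|/eqP/cards1P[g Gam_g]].
- rewrite ltnS leqn0 cards_eq0 => /eqP Gam0.
  by rewrite Gam0 lifted_constraint_set0 set0_ok.
- by rewrite lifted_constraint_card_gt1.
- move: Gam_Del_disj; rewrite Gam_g disjoints1 => g_notin_Del.
  by rewrite lifted_constraint_set1 // mulr_ge0 // subr_ge0.
Qed.

Theorem SA_feasible_singleton_supported (I : finType) (a : I -> T -> R)
    (b : I -> R) (psi : nat) :
  0 <= rho -> (forall i j, a i j <= b i) -> psi%:R * rho <= 1 ->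
  (forall i (Del : {set T}), (#|Del| <= psi)%N ->
     0 <= b i - rho * \sum_j a i j - rho * \sum_(h in Del) (b i - a i h)) ->
  SA_feasible a b psi y.
Proof.
move=> rho_ge0 a_le_b psi_rho_le1 set0_ok.
split=> // Gam Del Gam_Del_disj card_le.
have Del_le_psi : Gam = set0 -> (#|Del| <= psi)%N.
  by move=> Gam0; rewrite Gam0 cards0 in card_le.
split=> [i|].
  by apply: lifted_constraint_ge0 => // Gam0; apply/set0_ok/Del_le_psi.
(* The box term (ii) is the lifting of the trivial constraint 1 - 0 x >= 0. *)
have -> : \sum_(H in powerset Del) (-1) ^+ #|H| * y (Gam :|: H)
          = lifted_constraint 1 (fun=> 0) Gam Del.
  by apply: eq_bigr => H _; rewrite mul1r big1 ?subr0 // => j _; rewrite mul0r.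
apply: lifted_constraint_ge0 => // /Del_le_psi card_Del_le.
rewrite big1 ?mulr0 ?subr0 // sumr_const subr_ge0 mulrC.
by apply: le_trans psi_rho_le1; rewrite ler_wpM2r // ler_nat.
Qed.

End SingletonSupported.

Section BCMRelaxation.

Variables (R : realDomainType) (V E K : finType) (inc : E -> V -> bool)
  (col : E -> K) (w : K -> R).
Hypothesis w_ge1 : forall k, 1 <= w k.

Let w_ge0 k : 0 <= w k := le_trans ler01 (w_ge1 k).

Local Notation a := (BCM_a R inc col).
Local Notation b := (BCM_b w).

Lemma BCM_a_le_b i f : a i f <= b i.
Proof.
case: i => [[v|k]|[e|e]]; rewrite /BCM_a /BCM_b.
- by case: (inc f v).
- by case: (col f == k); rewrite ?w_ge1 ?w_ge0.
- by rewrite oppr_le0.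
- by case: (f == e).
Qed.

Lemma BCM_lifted_set0_ge0 (rho : R) (psi D M : nat) :
  0 <= rho -> (1 <= D)%N ->
  (forall v, #|[set e | inc e v]| <= D)%N ->
  (forall k, #|[set e | col e == k]| <= M)%N ->
  (D + psi)%:R * rho <= 1 ->
  (forall k, M%:R * rho <= w k * (1 - psi%:R * rho)) ->
  forall i (Del : {set E}), (#|Del| <= psi)%N ->
    0 <= b i - rho * \sum_j a i j - rho * \sum_(h in Del) (b i - a i h).
Proof.
move=> rho_ge0 D_ge1 deg_le_D class_le_M degree_ok class_ok i Del Del_le_psi.
have {}Del_le_psi : #|Del|%:R <= psi%:R :> R by rewrite ler_nat.
have {}D_ge1 : 1 <= D%:R :> R by rewrite ler1n.
rewrite natrD in degree_ok.
case: i => [[v|k]|[e|e]]; rewrite /BCM_a /BCM_b.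
- have deg_le : \sum_j (inc j v)%:R <= D%:R :> R.
    by move: (deg_le_D v); rewrite sumr_indicator ler_nat cardsE.
  have Del_sum_le : \sum_(h in Del) (1 - (inc h v)%:R) <= #|Del|%:R :> R.
    by rewrite -[X in _ <= X]mulr1; apply: sumr_le_card => h; rewrite gerBl.
  nra.
- have class_le : \sum_j (col j == k)%:R <= M%:R :> R.
    by move: (class_le_M k); rewrite sumr_indicator ler_nat cardsE.
  have Del_sum_le : \sum_(h in Del) (w k - (col h == k)%:R) <= psi%:R * w k.
    apply: le_trans (ler_wpM2r (w_ge0 k) Del_le_psi).
    by apply: sumr_le_card => h; rewrite gerBl.
  have := class_ok k; nra.
- rewrite sumrN sumr_delta1 (eq_bigr (fun h => (h == e)%:R)); last first.
    by move=> h _; rewrite sub0r opprK.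
  by rewrite sumr_delta; case: (e \in Del); rewrite ?mulr1n ?mulr0n; lra.
- rewrite sumr_delta1.
  have Del_sum_le : \sum_(h in Del) (1 - (h == e)%:R) <= #|Del|%:R :> R.
    by rewrite -[X in _ <= X]mulr1; apply: sumr_le_card => h; rewrite gerBl.
  nra.
Qed.

End BCMRelaxation.

Section HypercubeColoring.

Variables (l : nat) (col : cube_edge l -> 'I_l).
Hypothesis col_proper : proper_coloring col.

Lemma cube_edge_card (e : cube_edge l) : #|val e| = 2%N.
Proof.
case: e => /= e /existsP[u /existsP[v /andP[/eqP -> u_adj_v]]].
rewrite cards2; case: eqVneq u_adj_v => // ->; rewrite /cube_adj.
have -> : [set i | v i != v i] = set0 by apply/setP => i; rewrite !inE eqxx.
by rewrite cards0.
Qed.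

Lemma proper_coloring_disjoint (e f : cube_edge l) :
  e != f -> col e = col f -> [disjoint val e & val f].
Proof.
move=> e_neq_f col_ef; apply/pred0P => v /=; apply/negP => /andP[v_in_e v_in_f].
suff: col e != col f by rewrite col_ef eqxx.
apply: (col_proper e_neq_f); apply/existsP.
by exists v; rewrite /cube_inc v_in_e v_in_f.
Qed.

Lemma cube_degree_le (v : cube_vertex l) : (#|[set e | cube_inc e v]| <= l)%N.
Proof.
rewrite -(card_in_imset (f := col)) => [|e f].
  by rewrite -[l in (_ <= l)%N]card_ord max_card.
rewrite !inE /cube_inc => v_in_e v_in_f col_ef.
apply/eqP; apply: contraT => e_neq_f.
have /pred0P/(_ v) := proper_coloring_disjoint e_neq_f col_ef.
by rewrite /= v_in_e v_in_f.
Qed.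

Lemma cube_color_class_card (c : 'I_l) :
  (#|[set e | col e == c]| * 2 <= 2 ^ l)%N.
Proof.
set C := [set e | col e == c]; set P := [set val e | e in C].
have card_P : (\sum_(B in P) #|B| = #|C| * 2)%N.
  rewrite big_imset /= => [|e f _ _ /val_inj //].
  by rewrite -sum_nat_const; apply: eq_bigr => e _; rewrite cube_edge_card.
have P_triv : trivIset P.
  apply/trivIsetP => _ _ /imsetP[e e_in_C ->] /imsetP[f f_in_C ->] val_neq.
  apply: proper_coloring_disjoint; first by apply: contraNneq val_neq => ->.
  by move: e_in_C f_in_C; rewrite !inE => /eqP-> /eqP->.
rewrite -card_P (eqP P_triv); apply: leq_trans (max_card _) _.
by rewrite card_ffun card_bool card_ord.
Qed.

End HypercubeColoring.

Lemma leq_exp2_sub2 (n : nat) : (4 <= n)%N -> (n <= 2 ^ (n - 2))%N.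
Proof.
move=> /subnK <-; elim: (n - 4)%N => [|m IH] //.
by rewrite addSn subSn ?expnS; lia.
Qed.

Section Rho.

Variables (R : realFieldType) (eps : R) (l p : nat).
Hypotheses (eps_gt0 : 0 < eps) (eps_le_half : eps <= 1 / 2) (l_ge4 : (4 <= l)%N).

Local Notation rho := ((1 - eps) / (2 ^+ (l - 2) + p%:R * (1 - eps))).

Lemma one_sub_eps_gt0 : 0 < 1 - eps.
Proof. by have := eps_le_half; lra. Qed.

Lemma rho_denominator_gt0 : 0 < 2 ^+ (l - 2) + p%:R * (1 - eps) :> R.
Proof. by rewrite ltr_wpDr ?exprn_gt0 // mulr_ge0 // ltW ?one_sub_eps_gt0. Qed.

Lemma rho_ge0 : 0 <= rho.
Proof. by rewrite divr_ge0 ?ltW ?rho_denominator_gt0 ?one_sub_eps_gt0. Qed.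

Lemma rho_degree_le1 : (l + p)%:R * rho <= 1.
Proof.
rewrite mulrA ler_pdivrMr ?rho_denominator_gt0 // mul1r natrD mulrDl lerD2r.
have l_le : l%:R <= 2 ^+ (l - 2) :> R by rewrite -natrX ler_nat leq_exp2_sub2.
have l_ge0 : 0 <= l%:R :> R by [].
by have := eps_gt0; nra.
Qed.

Lemma rho_color_tight :
  2 * (1 - eps) * (1 - p%:R * rho) = (2 ^ (l - 1))%:R * rho.
Proof.
have -> : (l - 1 = (l - 2).+1)%N by lia.
rewrite natrX exprS; field.
by rewrite gt_eqF ?rho_denominator_gt0.
Qed.

End Rho.

Section YVec.

Variables (R : fieldType) (l p : nat) (eps : R).

Lemma y_vec_set0 : @y_vec R l p eps set0 = 1.
Proof. by rewrite /y_vec eqxx. Qed.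

Lemma y_vec_set1 (e : cube_edge l) :
  @y_vec R l p eps [set e] = (1 - eps) / (2 ^+ (l - 2) + p%:R * (1 - eps)).
Proof. by rewrite /y_vec cards1 eqxx -cards_eq0 cards1. Qed.

Lemma y_vec_card_gt1 (Z : {set cube_edge l}) :
  (1 < #|Z|)%N -> @y_vec R l p eps Z = 0.
Proof.
by move=> Z_gt1; rewrite /y_vec -cards_eq0 !gtn_eqF // (ltn_trans _ Z_gt1).
Qed.

End YVec.

Theorem mainTheorem1 (R : realFieldType) (eps : R) :
  0 < eps -> eps <= 1 / 2 ->
  forall psi : nat -> nat,
    (forall l, (0 < psi l)%N) ->
    (* psi = o(2^(l-2)) *)
    (forall d : R, 0 < d -> exists N : nat, forall l : nat, (N <= l)%N ->
        (psi l)%:R <= d * 2 ^+ (l - 2)) ->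
  exists L : nat, forall l : nat, (2 <= l)%N -> (L <= l)%N ->
    forall col : cube_edge l -> 'I_l, proper_coloring col ->
      SA_feasible (@BCM_a R (cube_vertex l) (cube_edge l) 'I_l (@cube_inc l) col)
                  (@BCM_b R (cube_vertex l) (cube_edge l) 'I_l
                          (fun _ : 'I_l => 2 * (1 - eps)))
                  (psi l) (@y_vec R l (psi l) eps).
Proof.
move=> eps_gt0 eps_le_half psi _ _; exists 4%N => l _ l_ge4 col col_proper.
have w_ge1 : forall k : 'I_l, 1 <= 2 * (1 - eps) by move=> _; lra.
have degree_ok := rho_degree_le1 (psi l) eps_gt0 eps_le_half l_ge4.
apply: (SA_feasible_singleton_supported (y_vec_set0 _ _ _) (y_vec_set1 _ _)
          (y_vec_card_gt1 _ _)).
- exact: rho_ge0.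
- exact: BCM_a_le_b.
- by apply: le_trans degree_ok; rewrite ler_wpM2r ?rho_ge0 // ler_nat leq_addl.
apply: (BCM_lifted_set0_ge0 w_ge1 (D := l) (M := 2 ^ (l - 1))) => //.
- exact: rho_ge0.
- exact: leq_trans l_ge4.
- exact: cube_degree_le col_proper.
- move=> c; have := cube_color_class_card col_proper c.
  have -> : (2 ^ l = 2 ^ (l - 1) * 2)%N by rewrite -expnSr; congr (_ ^ _)%N; lia.
  by rewrite leq_pmul2r.
- by move=> _; rewrite -rho_color_tight.
Qed.
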